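(* Let $c_p>0$, let $\mathcal{T}=\{\tau_1,\dots,\tau_m\}$ be a finite set of keep-alive window lengths in $[0,\infty]$, let $n\ge 0$ and let $x_1,\dots,x_n>0$ be any inter-arrival times with history $\mathcal{H}_n=(x_1,\dots,x_n)$. For a report $\hat\theta\ge 0$, let $\tau_{\hat\theta,\mathcal{H}_n}$ be the random window length chosen by the exponentially weighted average custom policy (defined in the context). Then for every threshold $x>0$, the function $$\hat\theta\;\mapsto\;\Pr\big(\tau_{\hat\theta,\mathcal{H}_n}<x\big)=\sum_{\tau_j\in\mathcal{T},\ \tau_j<x}\frac{e^{-L_n(\tau_j,\mathcal{H}_n,\hat\theta)}}{\sum_{\tau_k\in\mathcal{T}}e^{-L_n(\tau_k,\mathcal{H}_n,\hat\theta)}}$$ is monotonically non-increasing on $[0,\infty)$, i.e. $\frac{\partial}{\partial\hat\theta}\Pr(\tau_{\hat\theta,\mathcal{H}_n}<x)\le 0$. In particular, the probability that the policy produces a cold start on an arrival with inter-arrival time $x$ (namely $\Pr(\tau_{\hat\theta,\mathcal{H}_n}<x)$) is non-increasing in the reported cold-start cost $\hat\theta$.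
   Context: Keep-alive (TTL) caching model. A cost $c_p>0$ per unit time is incurred for keeping an application in cache. For a window length $\tau\in[0,\infty]$ and an inter-arrival time $x>0$: the cold-start indicator is $cs(\tau,x)=0$ if $x\le\tau$ and $cs(\tau,x)=1$ if $x>\tau$; the wasted-memory cost is $wm(\tau,x)=c_p x$ if $x\le \tau$ and $wm(\tau,x)=c_p\tau$ if $x>\tau$ (so $wm(\infty,x)=c_px$, $cs(\infty,x)=0$). For a history of inter-arrival times $\mathcal{H}_n=(x_1,\dots,x_n)$, a fixed window $\tau$ and a parameter $\theta\ge0$, the cumulative loss is $L_n(\tau,\mathcal{H}_n,\theta)=\sum_{j=1}^n wm(\tau,x_j)+\theta\sum_{j=1}^n cs(\tau,x_j)$. The exponentially weighted average custom policy with finite expert set $\mathcal{T}$, given report $\hat\theta$ and history $\mathcal{H}_n$, chooses $\tau_j\in\mathcal{T}$ with probability $\Pr(\tau_{\hat\theta,\mathcal{H}_n}=\tau_j)=e^{-L_n(\tau_j,\mathcal{H}_n,\hat\theta)}/\sum_{\tau_k\in\mathcal{T}}e^{-L_n(\tau_k,\mathcal{H}_n,\hat\theta)}$. *)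

From Stdlib Require Import Reals List.
From Coquelicot Require Import Coquelicot.
Open Scope R_scope.

Definition sumR (l : list R) : R := fold_right Rplus 0 l.

(* cold-start indicator cs(tau, x): 0 if x <= tau, 1 if x > tau;
   cs(+oo, x) = 0.  (tau = -oo never occurs: windows lie in [0, +oo].) *)
Definition cs (tau : Rbar) (x : R) : R :=
  match tau with
  | Finite t => if Rle_dec x t then 0 else 1
  | p_infty => 0
  | m_infty => 1
  end.

Definition wm (cp : R) (tau : Rbar) (x : R) : R :=
  match tau with
  | Finite t => if Rle_dec x t then cp * x else cp * t
  | p_infty => cp * x
  | m_infty => 0
  end.

Definition loss (cp : R) (tau : Rbar) (H : list R) (theta : R) : R :=
  sumR (map (fun x => wm cp tau x) H) + theta * sumR (map (fun x => cs tau x) H).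

(* probability that the exponentially weighted average custom policy with
   expert set T (a duplicate-free list) chooses tau_j *)
Definition ewa_prob (cp : R) (T : list Rbar) (H : list R) (theta : R) (tauj : Rbar) : R :=
  exp (- loss cp tauj H theta) /
  sumR (map (fun tauk => exp (- loss cp tauk H theta)) T).

Definition prob_lt (cp : R) (T : list Rbar) (H : list R) (theta x : R) : R :=
  sumR (map (fun tauj => if Rbar_lt_dec tauj (Finite x) then ewa_prob cp T H theta tauj else 0) T).

(* Raising the reported cost from [theta] to [theta + d] multiplies the weight
   of every expert [tau] by [exp (- d * c tau)], where [c tau] is its number of
   cold starts on the history.  Since [cs] is antitone in the window, experts
   with [tau < x] have [c tau >= c x] and the others [c tau <= c x]: the first
   group is scaled by at most [exp (- d * c x)], the second by at least as much,
   so the normalised mass of the first group cannot grow. *)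
From Stdlib Require Import Reals List Lra.
From Coquelicot Require Import Coquelicot.
Open Scope R_scope.

Section ListSums.

Context {A : Type}.

Lemma sumR_le (f g : A -> R) (l : list A) :
  (forall a, In a l -> f a <= g a) -> sumR (map f l) <= sumR (map g l).
Proof.
  induction l as [|a l IH]; simpl; intros Hfg; [lra|].
  pose proof (Hfg a (or_introl eq_refl)).
  pose proof (IH (fun b Hb => Hfg b (or_intror Hb))). lra.
Qed.

Lemma sumR_ge0 (f : A -> R) (l : list A) :
  (forall a, In a l -> 0 <= f a) -> 0 <= sumR (map f l).
Proof.
  induction l as [|a l IH]; simpl; intros Hf; [lra|].
  pose proof (Hf a (or_introl eq_refl)).
  pose proof (IH (fun b Hb => Hf b (or_intror Hb))). lra.
Qed.

Lemma sumR_pos (f : A -> R) (l : list A) :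
  l <> nil -> (forall a, 0 < f a) -> 0 < sumR (map f l).
Proof.
  destruct l as [|a l]; [congruence|]; intros _ Hf; simpl.
  pose proof (sumR_ge0 f l (fun b _ => Rlt_le _ _ (Hf b))).
  pose proof (Hf a). lra.
Qed.

Lemma sumR_scale (c : R) (f : A -> R) (l : list A) :
  sumR (map (fun a => c * f a) l) = c * sumR (map f l).
Proof. induction l as [|a l IH]; simpl; [ring| rewrite IH; ring]. Qed.

Lemma sumR_add (f g : A -> R) (l : list A) :
  sumR (map (fun a => f a + g a) l) = sumR (map f l) + sumR (map g l).
Proof. induction l as [|a l IH]; simpl; [ring| rewrite IH; ring]. Qed.

Lemma sumR_ext (f g : A -> R) (l : list A) :
  (forall a, f a = g a) -> sumR (map f l) = sumR (map g l).
Proof. intros Hfg; induction l as [|a l IH]; simpl; [reflexivity| now rewrite Hfg, IH]. Qed.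

End ListSums.

Lemma share_le_of_scaled (a1 b1 a2 b2 e : R) :
  0 <= a1 -> 0 <= b1 -> 0 < a1 + b1 -> 0 < a2 + b2 ->
  a2 <= e * a1 -> e * b1 <= b2 ->
  a2 / (a2 + b2) <= a1 / (a1 + b1).
Proof.
  intros Ha1 Hb1 Hs1 Hs2 Ha Hb.
  assert (Hcross : a2 * b1 <= a1 * b2) by nra.
  apply (Rmult_le_reg_r ((a1 + b1) * (a2 + b2))); [nra|].
  replace (a2 / (a2 + b2) * ((a1 + b1) * (a2 + b2))) with (a2 * (a1 + b1)) by (field; lra).
  replace (a1 / (a1 + b1) * ((a1 + b1) * (a2 + b2))) with (a1 * (a2 + b2)) by (field; lra).
  lra.
Qed.

Lemma exp_le_compat (a b : R) : a <= b -> exp a <= exp b.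
Proof.
  intros [Hlt|Heq]; [left; now apply exp_increasing | right; now rewrite Heq].
Qed.

Lemma cs_antitone (t1 t2 : Rbar) (xi : R) : Rbar_le t1 t2 -> cs t2 xi <= cs t1 xi.
Proof.
  destruct t1 as [a| |], t2 as [b| |]; simpl; intros Hle; try contradiction;
    repeat destruct Rle_dec; lra.
Qed.

Definition cold_starts (tau : Rbar) (H : list R) : R := sumR (map (cs tau) H).

Lemma cold_starts_antitone (t1 t2 : Rbar) (H : list R) :
  Rbar_le t1 t2 -> cold_starts t2 H <= cold_starts t1 H.
Proof. intros Ht; apply sumR_le; intros xi _; now apply cs_antitone. Qed.

Definition ewa_weight (cp : R) (H : list R) (theta : R) (tau : Rbar) : R :=
  exp (- loss cp tau H theta).

Lemma ewa_weight_shift (cp : R) (H : list R) (theta d : R) (tau : Rbar) :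
  ewa_weight cp H (theta + d) tau
  = ewa_weight cp H theta tau * exp (- (d * cold_starts tau H)).
Proof.
  unfold ewa_weight, loss, cold_starts; rewrite <- exp_plus; f_equal.
  change (fun xi => cs tau xi) with (cs tau); ring.
Qed.

Lemma ewa_weight_shift_le (cp : R) (H : list R) (theta d K : R) (tau : Rbar) :
  0 <= d -> K <= cold_starts tau H ->
  ewa_weight cp H (theta + d) tau <= exp (- (d * K)) * ewa_weight cp H theta tau.
Proof.
  intros Hd HK; rewrite ewa_weight_shift, Rmult_comm.
  apply Rmult_le_compat_r; [left; apply exp_pos|].
  apply exp_le_compat; nra.
Qed.

Lemma ewa_weight_shift_ge (cp : R) (H : list R) (theta d K : R) (tau : Rbar) :
  0 <= d -> cold_starts tau H <= K ->
  exp (- (d * K)) * ewa_weight cp H theta tau <= ewa_weight cp H (theta + d) tau.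
Proof.
  intros Hd HK; rewrite ewa_weight_shift, (Rmult_comm (ewa_weight _ _ _ _)).
  apply Rmult_le_compat_r; [left; apply exp_pos|].
  apply exp_le_compat; nra.
Qed.

Section Masses.

Variables (cp : R) (T : list Rbar) (H : list R) (x : R).

Definition mass_lt (theta : R) : R :=
  sumR (map (fun tau => if Rbar_lt_dec tau (Finite x) then ewa_weight cp H theta tau else 0) T).

Definition mass_ge (theta : R) : R :=
  sumR (map (fun tau => if Rbar_lt_dec tau (Finite x) then 0 else ewa_weight cp H theta tau) T).

Lemma mass_lt_ge0 (theta : R) : 0 <= mass_lt theta.
Proof.
  apply sumR_ge0; intros tau _; destruct Rbar_lt_dec; [left; apply exp_pos | lra].
Qed.

Lemma mass_ge_ge0 (theta : R) : 0 <= mass_ge theta.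
Proof.
  apply sumR_ge0; intros tau _; destruct Rbar_lt_dec; [lra | left; apply exp_pos].
Qed.

Lemma mass_total (theta : R) :
  mass_lt theta + mass_ge theta = sumR (map (ewa_weight cp H theta) T).
Proof.
  unfold mass_lt, mass_ge; rewrite <- sumR_add.
  apply sumR_ext; intros tau; destruct Rbar_lt_dec; ring.
Qed.

Lemma mass_total_pos (theta : R) : T <> nil -> 0 < mass_lt theta + mass_ge theta.
Proof. intros HT; rewrite mass_total; apply sumR_pos; [exact HT | intros; apply exp_pos]. Qed.

Lemma prob_lt_share (theta : R) :
  prob_lt cp T H theta x = mass_lt theta / (mass_lt theta + mass_ge theta).
Proof.
  rewrite mass_total; unfold prob_lt, ewa_prob, mass_lt, Rdiv.
  rewrite Rmult_comm, <- sumR_scale; apply sumR_ext; intros tau.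
  destruct Rbar_lt_dec; unfold ewa_weight; ring.
Qed.

Lemma mass_lt_shift (theta d : R) :
  0 <= d -> mass_lt (theta + d) <= exp (- (d * cold_starts (Finite x) H)) * mass_lt theta.
Proof.
  intros Hd; unfold mass_lt; rewrite <- sumR_scale; apply sumR_le; intros tau _.
  destruct Rbar_lt_dec as [Hlt|_]; [|lra].
  apply ewa_weight_shift_le; [exact Hd|].
  apply cold_starts_antitone, Rbar_lt_le, Hlt.
Qed.

Lemma mass_ge_shift (theta d : R) :
  0 <= d -> exp (- (d * cold_starts (Finite x) H)) * mass_ge theta <= mass_ge (theta + d).
Proof.
  intros Hd; unfold mass_ge; rewrite <- sumR_scale; apply sumR_le; intros tau _.
  destruct Rbar_lt_dec as [_|Hnlt]; [lra|].
  apply ewa_weight_shift_ge; [exact Hd|].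
  apply cold_starts_antitone, Rbar_not_lt_le, Hnlt.
Qed.

End Masses.

Theorem lemma5p1 (cp : R) (T : list Rbar) (H : list R) (x : R) :
  0 < cp ->
  T <> nil ->
  NoDup T ->
  List.Forall (fun tau => Rbar_le (Finite 0) tau) T ->
  List.Forall (fun xi => 0 < xi) H ->
  0 < x ->
  forall theta1 theta2 : R, 0 <= theta1 -> theta1 <= theta2 ->
    prob_lt cp T H theta2 x <= prob_lt cp T H theta1 x.
Proof.
  intros _ HT _ _ _ _ theta1 theta2 _ Hle.
  replace theta2 with (theta1 + (theta2 - theta1)) by ring.
  rewrite !prob_lt_share.
  apply share_le_of_scaled with (e := exp (- ((theta2 - theta1) * cold_starts (Finite x) H))).
  - apply mass_lt_ge0.
  - apply mass_ge_ge0.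
  - now apply mass_total_pos.
  - now apply mass_total_pos.
  - apply mass_lt_shift; lra.
  - apply mass_ge_shift; lra.
Qed.
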